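(* Let $W\in\mathbb{C}[x_1,\dots,x_n]$ be a non-degenerate quasi-homogeneous polynomial with weights $q_i:=\mathrm{wt}(x_i)<1$ for $i=1,\dots,n$. Then there is a constant $C$ depending only on $W$ such that for every $(u_1,\dots,u_n)\in\mathbb{C}^n$ and every $i$, $$|u_i|\le C\Big(\sum_{j=1}^n\Big|\frac{\partial W}{\partial x_j}(u_1,\dots,u_n)\Big|+1\Big)^{\delta_i},\qquad \delta_i=\frac{q_i}{\min_j(1-q_j)}.$$ Moreover, if $q_i\le1/2$ for all $i$ then $\delta_i\le1$ for all $i$, and if $q_i<1/2$ for all $i$ then $\delta_i<1$ for all $i$.
   Context: $W$ is quasi-homogeneous if there are positive integers $d,k_1,\dots,k_n$ with $W(\lambda^{k_1}x_1,\dots,\lambda^{k_n}x_n)=\lambda^dW(x_1,\dots,x_n)$ for all $\lambda\in\mathbb{C}^*$ (taken least); the weight of $x_i$ is $q_i=k_i/d$. $W$ is non-degenerate if the weights $q_i$ are uniquely determined by $W$ and the affine hypersurface $W=0$ has an isolated singularity at the origin (equivalently, the only common zero of all $\partial W/\partial x_j$ is $0$). *)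

From HB Require Import structures.
From mathcomp Require Import all_boot all_order all_algebra.
From mathcomp Require Import all_classical all_reals all_analysis.
From mathcomp Require Import complex.
From mathcomp Require mpoly.
Set Implicit Arguments. Unset Strict Implicit. Unset Printing Implicit Defensive.
Import Order.TTheory GRing.Theory Num.Theory.
Local Open Scope ring_scope.

Notation cpoly R n := (@mpoly.mpoly n (complex R)).

Definition ev {R : rcfType} {n : nat} (W : cpoly R n) (x : 'I_n -> R[i]) : R[i] :=
  mpoly.meval x W.

Definition pderiv {R : rcfType} {n : nat} (j : 'I_n) (W : cpoly R n) : cpoly R n :=
  mpoly.mderiv j W.

Definition qh_weights {R : rcfType} {n : nat} (W : cpoly R n) (q : 'I_n -> rat) : Prop :=
  exists (d : nat) (k : 'I_n -> nat),
    (0 < d)%N /\ (forall i, 0 < k i)%N /\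
    (forall i, q i = (k i)%:R / d%:R) /\
    (forall (l : R[i]) (x : 'I_n -> R[i]), l != 0 ->
       ev W (fun i => l ^+ k i * x i) = l ^+ d * ev W x).

Definition nondegenerate_qh {R : rcfType} {n : nat} (W : cpoly R n) (q : 'I_n -> rat) : Prop :=
  [/\ qh_weights W q,
      (forall q' : 'I_n -> rat, qh_weights W q' -> forall i, q' i = q i) &
      (forall x : 'I_n -> R[i], (forall j, ev (pderiv j W) x = 0) -> forall i, x i = 0)].

(* min_j (1 - q_j)  (for n >= 1 the neutral element 1 plays no role since q_j > 0) *)
Definition min_defect {n : nat} (q : 'I_n -> rat) : rat :=
  \big[Order.min/1]_(j < n) (1 - q j).

Definition delta {n : nat} (q : 'I_n -> rat) (i : 'I_n) : rat := q i / min_defect q.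

(* modulus |z| of a complex number z = a + ib, as a real number sqrt(a^2+b^2) *)
Definition cabs {R : rcfType} (z : R[i]) : R := ComplexField.Normc.normc z.

(* Write q_i = k_i / d. Quasi-homogeneity gives
   dW/dx_j (t^k v) = t^(d - k_j) dW/dx_j (v), which is read off the restriction of W
   to lines parallel to the axes. Every u outside the unit polydisc is t^k v with
   t >= 1 and v on the compact polysphere max_i |v_i| = 1, where the gradient norm
   has a positive minimum m by non-degeneracy. As d - k_j >= d mu for
   mu = min_j (1 - q_j), the gradient norm at u is at least m t^(d mu), while
   |u_i| <= t^(k_i) = (t^(d mu))^(delta_i). *)

From HB Require Import structures.
From mathcomp Require Import all_boot all_order all_algebra.
From mathcomp Require Import mpoly.
From mathcomp Require Import all_classical all_reals all_analysis.
From mathcomp Require Import complex ring lra.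
Import Order.TTheory GRing.Theory Num.Theory.
Import numFieldNormedType.Exports.
Set Implicit Arguments. Unset Strict Implicit. Unset Printing Implicit Defensive.
Local Open Scope ring_scope.

Lemma poly_horner_inj (F : numDomainType) (p q : {poly F}) :
  (forall y, p.[y] = q.[y]) -> p = q.
Proof.
move=> epq; apply/eqP; rewrite -subr_eq0; apply/eqP.
apply: (@roots_geq_poly_eq0 _ _ [seq i%:R | i <- iota 0 (size (p - q))]).
- by apply/allP => y _; rewrite /root !hornerE epq subrr.
- by rewrite map_inj_uniq ?iota_uniq // => a b /eqP; rewrite eqr_nat => /eqP.
- by rewrite size_map size_iota.
Qed.

Section LineRestriction.
Variables (F : numFieldType) (n : nat).
Implicit Types (x : 'I_n -> F) (j : 'I_n) (p : {mpoly F[n]}).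

Definition line_poly x j p : {poly F} :=
  mmap (@polyC F) (fun i => (x i)%:P + (i == j)%:R *: 'X) p.

Lemma horner_line_poly x j p y :
  (line_poly x j p).[y] = p.@[fun i => x i + (i == j)%:R * y].
Proof.
rewrite /line_poly /mmap mevalE horner_sum; apply: eq_bigr => m _.
rewrite hornerM hornerC /mmap1 horner_prod; congr (_ * _); apply: eq_bigr => i _.
by rewrite horner_exp hornerD hornerC hornerZ hornerX.
Qed.

Lemma deriv0_line_polyX x j m :
  (line_poly x j 'X_[m])^`().[0] = ('X_[m]^`M(j)).@[x].
Proof.
rewrite /line_poly mmapX mderivX mevalZ mevalX /mmap1.
rewrite (bigD1 j) //= [X in _ = _ * X](bigD1 j) //=.
have -> : \prod_(i < n | i != j) ((x i)%:P + (i == j)%:R *: 'X) ^+ m i =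
          (\prod_(i < n | i != j) x i ^+ (m - U_(j))%MM i)%:P.
  rewrite rmorph_prod; apply: eq_bigr => i ij.
  by rewrite (negbTE ij) scale0r addr0 rmorphXn mnmBE mnm1E eq_sym (negbTE ij) subn0.
rewrite derivM derivC mulr0 addr0 deriv_exp !hornerE eqxx scale1r derivD derivC derivX.
by rewrite mnmBE mnm1E eqxx subn1 !hornerE hornerMn horner_exp !hornerE -mulr_natl.
Qed.

Lemma deriv0_line_poly x j p : (line_poly x j p)^`().[0] = (p^`M(j)).@[x].
Proof.
elim/mpolyind: p => [|c m p _ _ IH].
  by rewrite /line_poly mmap0 mderiv0 meval0 deriv0 horner0.
rewrite mderivD mevalD mderivZ mevalZ -IH -deriv0_line_polyX /line_poly.
by rewrite mmapD mmapZ derivD hornerD deriv_mulC hornerM hornerC.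
Qed.

Lemma mderiv_qh_scaling (W : {mpoly F[n]}) (d : nat) (k : 'I_n -> nat) :
  (forall l x, l != 0 -> W.@[fun i => l ^+ k i * x i] = l ^+ d * W.@[x]) ->
  forall l x j, l != 0 ->
  (W^`M(j)).@[fun i => l ^+ k i * x i] = l ^+ d / l ^+ k j * (W^`M(j)).@[x].
Proof.
move=> hom l x j l0.
have lk0 : l ^+ k j != 0 by rewrite expf_neq0.
have line_hom : line_poly (fun i => l ^+ k i * x i) j W =
                l ^+ d *: (line_poly x j W \Po ((l ^+ k j)^-1 *: 'X)).
  apply: poly_horner_inj => y.
  rewrite horner_line_poly hornerZ horner_comp horner_line_poly hornerZ hornerX -hom //.
  apply: meval_eq => i /=; case: (eqVneq i j) => [->|ne]; last by rewrite !mul0r !addr0.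
  by rewrite !mul1r mulrDr mulrA divff // mul1r.
rewrite -!deriv0_line_poly line_hom derivZ deriv_comp derivZ derivX.
rewrite hornerZ hornerM horner_comp !hornerZ hornerX mulr0 -polyC1 hornerC mulr1.
by rewrite [_ * _^-1]mulrC mulrA.
Qed.

End LineRestriction.

Section ComplexModulus.
Variable R : rcfType.
Implicit Types z w : R[i].

Lemma cabsE z : cabs z = Num.sqrt (complex.Re z ^+ 2 + complex.Im z ^+ 2).
Proof. by case: z. Qed.

Lemma cabs_ge0 z : 0 <= cabs z.
Proof. by rewrite cabsE sqrtr_ge0. Qed.

Lemma cabsM z w : cabs (z * w) = cabs z * cabs w.
Proof. exact: ComplexField.Normc.normcM. Qed.

Lemma cabs_eq0 z : cabs z = 0 -> z = 0.
Proof. exact: ComplexField.Normc.eq0_normc. Qed.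

Lemma cabs_real (t : R) : 0 <= t -> cabs t%:C%C = t.
Proof. by move=> t0; rewrite cabsE /= expr0n addr0 sqrtr_sqr ger0_norm. Qed.

Lemma Re_le_cabs z : `|complex.Re z| <= cabs z.
Proof. by rewrite cabsE -sqrtr_sqr ler_wsqrtr // lerDl sqr_ge0. Qed.

Lemma Im_le_cabs z : `|complex.Im z| <= cabs z.
Proof. by rewrite cabsE -sqrtr_sqr ler_wsqrtr // lerDr sqr_ge0. Qed.

Lemma Re_mulc z w :
  complex.Re (z * w) = complex.Re z * complex.Re w - complex.Im z * complex.Im w.
Proof. by case: z; case: w. Qed.

Lemma Im_mulc z w :
  complex.Im (z * w) = complex.Re z * complex.Im w + complex.Im z * complex.Re w.
Proof. by case: z; case: w. Qed.

End ComplexModulus.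

Section ReImContinuity.
Variables (R : realType) (T : topologicalType).
Implicit Types (f g : T -> R[i]).

Definition reim_continuous g :=
  continuous (fun v => complex.Re (g v)) /\ continuous (fun v => complex.Im (g v)).

Lemma reim_continuous_cst c : reim_continuous (fun _ => c).
Proof. by split; apply: cst_continuous. Qed.

Lemma reim_continuousD f g :
  reim_continuous f -> reim_continuous g -> reim_continuous (fun v => f v + g v).
Proof.
move=> [f1 f2] [g1 g2]; split.
- by under eq_fun do rewrite raddfD /=; move=> x; exact: continuousD (f1 x) (g1 x).
- by under eq_fun do rewrite raddfD /=; move=> x; exact: continuousD (f2 x) (g2 x).
Qed.

Lemma reim_continuousM f g :
  reim_continuous f -> reim_continuous g -> reim_continuous (fun v => f v * g v).
Proof.
move=> [f1 f2] [g1 g2]; split.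
- under eq_fun do rewrite Re_mulc.
  by move=> x; exact: (continuousB (continuousM (f1 x) (g1 x)) (continuousM (f2 x) (g2 x))).
- under eq_fun do rewrite Im_mulc.
  by move=> x; exact: (continuousD (continuousM (f1 x) (g2 x)) (continuousM (f2 x) (g1 x))).
Qed.

Lemma reim_continuousX f k : reim_continuous f -> reim_continuous (fun v => f v ^+ k).
Proof.
move=> cf; elim: k => [|k IH].
  by under eq_fun do rewrite expr0; exact: reim_continuous_cst.
by under eq_fun do rewrite exprS; exact: reim_continuousM.
Qed.

Lemma reim_continuous_sum I (s : seq I) (P : pred I) (f : I -> T -> R[i]) :
  (forall i, reim_continuous (f i)) -> reim_continuous (fun v => \sum_(i <- s | P i) f i v).
Proof.
move=> cf; elim: s => [|a s IH].
  by under eq_fun do rewrite big_nil; exact: reim_continuous_cst.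
under eq_fun do rewrite big_cons.
by case: (P a) => //; exact: reim_continuousD.
Qed.

Lemma reim_continuous_prod I (s : seq I) (P : pred I) (f : I -> T -> R[i]) :
  (forall i, reim_continuous (f i)) -> reim_continuous (fun v => \prod_(i <- s | P i) f i v).
Proof.
move=> cf; elim: s => [|a s IH].
  by under eq_fun do rewrite big_nil; exact: reim_continuous_cst.
under eq_fun do rewrite big_cons.
by case: (P a) => //; exact: reim_continuousM.
Qed.

Lemma reim_continuous_meval n (p : {mpoly R[i][n]}) (e : T -> 'I_n -> R[i]) :
  (forall i, reim_continuous (fun v => e v i)) -> reim_continuous (fun v => p.@[e v]).
Proof.
move=> ce; under eq_fun do rewrite mevalE.
apply: reim_continuous_sum => m; apply: reim_continuousM; first exact: reim_continuous_cst.
by apply: reim_continuous_prod => i; apply: reim_continuousX.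
Qed.

Lemma continuous_cabs g : reim_continuous g -> continuous (fun v => cabs (g v)).
Proof.
move=> [g1 g2]; under eq_fun do rewrite cabsE !expr2.
move=> x; apply: continuous_comp; last exact: sqrt_continuous.
exact: (continuousD (continuousM (g1 x) (g1 x)) (continuousM (g2 x) (g2 x))).
Qed.

Lemma continuous_sumr I (s : seq I) (P : pred I) (f : I -> T -> R) :
  (forall i, continuous (f i)) -> continuous (fun v => \sum_(i <- s | P i) f i v).
Proof.
move=> cf; elim: s => [|a s IH].
  by under eq_fun do rewrite big_nil; apply: cst_continuous.
under eq_fun do rewrite big_cons.
by case: (P a) => // x; exact: (continuousD (cf a x) (IH x)).
Qed.

End ReImContinuity.

Definition grad_norm {R : rcfType} {n : nat} (W : cpoly R n) (u : 'I_n -> R[i]) : R :=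
  \sum_(j < n) cabs (ev (pderiv j W) u).

Definition polysphere {R : rcfType} {n : nat} (u : 'I_n -> R[i]) : Prop :=
  (forall i, cabs (u i) <= 1) /\ exists i, cabs (u i) = 1.

Section Compactness.
Variables (R : realType) (n : nat).
Local Open Scope classical_set_scope.

Definition complex_of_rV (v : 'rV[R]_(n + n)) (i : 'I_n) : R[i] :=
  Complex (v ord0 (lshift n i)) (v ord0 (rshift n i)).

Lemma reim_continuous_complex_of_rV i : reim_continuous (fun v => complex_of_rV v i).
Proof. by split; apply: coord_continuous. Qed.

Lemma complex_of_rV_surj u : exists v, complex_of_rV v = u.
Proof.
exists (row_mx (\row_i complex.Re (u i)) (\row_i complex.Im (u i))).
by apply: funext => i; rewrite /complex_of_rV row_mxEl row_mxEr !mxE; case: (u i).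
Qed.

Lemma compact_polysphere : compact [set v | polysphere (complex_of_rV v)].
Proof.
have cabs_cont i := continuous_cabs (reim_continuous_complex_of_rV i).
have closed_sphere : closed [set v | polysphere (complex_of_rV v)].
  have -> : [set v | polysphere (complex_of_rV v)] =
      \bigcap_(i in [set: 'I_n]) ((fun v => cabs (complex_of_rV v i)) @^-1` [set x | x <= 1])
      `&` \bigcup_(i in [set: 'I_n]) ((fun v => cabs (complex_of_rV v i)) @^-1` [set x | x = 1]).
    apply/seteqP; split => v /=.
      by move=> [le1 [i eq1]]; split; [move=> j _; exact: le1 | exists i].
    by move=> [le1 [i _ eq1]]; split; [move=> j; exact: le1 | exists i].
  apply: closedI.
    by apply: closed_bigI => i _; apply: (proj1 (continuous_closedP _) (cabs_cont i)); apply: closed_le.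
  apply: closed_bigcup => [|i _]; first exact: finite_finset.
  by apply: (proj1 (continuous_closedP _) (cabs_cont i)); apply: closed_eq.
apply: (subclosed_compact closed_sphere
  (@rV_compact R (n + n) (fun=> `[-1, 1]%classic) (fun=> @segment_compact R (-1) 1))).
move=> v [le1 _] k /=; rewrite -(splitK k); case: (fintype.split k) => i /=;
  rewrite in_itv /= -ler_norml.
- exact: le_trans (Re_le_cabs _) (le1 i).
- exact: le_trans (Im_le_cabs _) (le1 i).
Qed.

Variable W : cpoly R n.

Lemma continuous_grad_norm : continuous (fun v => grad_norm W (complex_of_rV v)).
Proof.
apply: continuous_sumr => j; apply: continuous_cabs.
by apply: reim_continuous_meval => i; exact: reim_continuous_complex_of_rV.
Qed.

Hypothesis nondeg :
  forall x, (forall j, ev (pderiv j W) x = 0) -> forall i, x i = 0.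

Lemma grad_norm_gt0 u : polysphere u -> 0 < grad_norm W u.
Proof.
move=> [_ [i ui1]]; rewrite lt_def sumr_ge0 ?andbT; last by move=> j _; exact: cabs_ge0.
apply/eqP => /(psumr_eq0P (fun j _ => cabs_ge0 _)) grad0.
have ui0 := nondeg (fun j => cabs_eq0 (grad0 j isT)) i.
by move: ui1; rewrite ui0 /cabs ComplexField.Normc.normc0 => /esym/eqP; rewrite oner_eq0.
Qed.

Lemma grad_norm_polysphere_lb :
  exists2 m : R, 0 < m & forall u, polysphere u -> m <= grad_norm W u.
Proof.
have [S0|S0] := pselect ([set v | polysphere (complex_of_rV v)] !=set0).
  have [c Sc cmin] := compact_EVT_min S0 compact_polysphere
    (continuous_subspaceT continuous_grad_norm).
  exists (grad_norm W (complex_of_rV c)); first by apply: grad_norm_gt0; rewrite inE in Sc.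
  move=> u Su; have [v vu] := complex_of_rV_surj u.
  by rewrite -vu; apply: cmin; rewrite inE /= vu.
exists 1 => // u Su; have [v vu] := complex_of_rV_surj u.
by exfalso; apply: S0; exists v; rewrite /= vu.
Qed.

End Compactness.

Lemma powR_le_scaled (R : realType) (m s f e : R) :
  0 < m -> 0 <= s -> 0 <= e -> m * s <= f -> s `^ e <= m `^ (- e) * f `^ e.
Proof.
move=> m_gt0 s_ge0 e_ge0 msf.
have ms_ge0 : 0 <= m * s := mulr_ge0 (ltW m_gt0) s_ge0.
rewrite powRN mulrC ler_pdivlMr ?powR_gt0 // -powRM ?(ltW m_gt0) // mulrC.
by apply: ge0_ler_powR; rewrite ?nnegrE ?(le_trans ms_ge0 msf).
Qed.

Section QuasiHomogeneousScaling.
Variables (R : realType) (n : nat) (W : cpoly R n) (d : nat) (k : 'I_n -> nat).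
Hypothesis k_gt0 : forall i, (0 < k i)%N.
Hypothesis k_lt_d : forall i, (k i < d)%N.
Hypothesis hom : forall (l : R[i]) (x : 'I_n -> R[i]),
  l != 0 -> ev W (fun i => l ^+ k i * x i) = l ^+ d * ev W x.

Lemma grad_norm_scaling (t r : R) (v : 'I_n -> R[i]) :
  1 <= t -> (forall j, r <= (d - k j)%:R) ->
  t `^ r * grad_norm W v <= grad_norm W (fun j => t%:C%C ^+ k j * v j).
Proof.
move=> t_ge1 r_le.
have t_gt0 : 0 < t := lt_le_trans ltr01 t_ge1.
have tC_neq0 : t%:C%C != 0 :> R[i] by rewrite eq_complex /= gt_eqF.
rewrite /grad_norm mulr_sumr; apply: ler_sum => j _.
rewrite /ev /pderiv (mderiv_qh_scaling hom _ _ tC_neq0) cabsM -expfB // -rmorphXn.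
rewrite cabs_real ?exprn_ge0 ?(ltW t_gt0) //; apply: ler_wpM2r; first exact: cabs_ge0.
by rewrite -powR_mulrn ?(ltW t_gt0) //; apply: ler_powR.
Qed.

Lemma polydisc_or_scaled_polysphere (u : 'I_n -> R[i]) :
  (forall i, cabs (u i) <= 1) \/
  exists2 t : R, 1 <= t & exists2 v, polysphere v & u = fun j => t%:C%C ^+ k j * v j.
Proof.
pose g j := cabs (u j) `^ (k j)%:R^-1.
have g_ge0 j : 0 <= g j := powR_ge0 _ _.
have u_g j : cabs (u j) = g j ^+ k j.
  rewrite -powR_mulrn // -powRrM mulVf ?powRr1 ?cabs_ge0 //.
  by rewrite pnatr_eq0 -lt0n.
have [g_le1|] := pselect (forall i, g i <= 1).
  by left => i; rewrite u_g exprn_ile1.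
move=> /existsNP [i /negP]; rewrite -ltNge => gi_gt1.
have [i0 _ g_max] := @real_arg_maxP R _ i xpredT g isT (fun j _ => num_real _).
set t := g i0 in g_max.
have t_ge1 : 1 <= t := ltW (lt_le_trans gi_gt1 (g_max i isT)).
have tk_gt0 j : 0 < t ^+ k j by rewrite exprn_gt0 // (lt_le_trans ltr01).
right; exists t => //.
pose v j := u j * ((t ^+ k j)^-1)%:C%C.
have v_abs j : cabs (v j) = cabs (u j) / t ^+ k j.
  by rewrite cabsM cabs_real // invr_ge0 ltW.
exists v; last first.
  apply: funext => j; rewrite /v mulrCA -rmorphXn -rmorphM divff ?gt_eqF //.
  by rewrite rmorph1 mulr1.
split; last by exists i0; rewrite v_abs u_g divff ?gt_eqF.
move=> j; rewrite v_abs ler_pdivrMr // mul1r u_g.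
by rewrite lerXn2r ?nnegrE ?g_ge0 //; exact: g_max.
Qed.

End QuasiHomogeneousScaling.

Section Weights.
Variables (n : nat) (q : 'I_n -> rat).

Lemma min_defect_le j : min_defect q <= 1 - q j.
Proof. exact: bigmin_le. Qed.

Lemma min_defect_gt0 : (forall i, q i < 1) -> 0 < min_defect q.
Proof. by move=> q_lt1; apply: lt_bigmin => // j _; rewrite subr_gt0. Qed.

Lemma delta_le1 : (forall i, q i <= 1/2) -> forall i, delta q i <= 1.
Proof.
move=> q_le i; have half_le : 1/2 <= min_defect q.
  by apply: le_bigmin => [|j _]; [lra | have := q_le j; lra].
by rewrite ler_pdivrMr ?mul1r ?(le_trans (q_le i)) // (lt_le_trans _ half_le).
Qed.

Lemma delta_lt1 : (forall i, q i < 1/2) -> forall i, delta q i < 1.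
Proof.
move=> q_lt i; have half_lt : 1/2 < min_defect q.
  by apply: lt_bigmin => [|j _]; [lra | have := q_lt j; lra].
by rewrite ltr_pdivrMr ?mul1r ?(lt_trans (q_lt i)) // (lt_trans _ half_lt).
Qed.

End Weights.

Section GradientEstimate.
Variables (R : realType) (n : nat) (W : cpoly R n) (q : 'I_n -> rat).
Variables (d : nat) (k : 'I_n -> nat).
Hypotheses (d_gt0 : (0 < d)%N) (k_gt0 : forall i, (0 < k i)%N).
Hypothesis qE : forall i, q i = (k i)%:R / d%:R.
Hypothesis q_lt1 : forall i, q i < 1.
Hypothesis hom : forall (l : R[i]) (x : 'I_n -> R[i]),
  l != 0 -> ev W (fun i => l ^+ k i * x i) = l ^+ d * ev W x.
Hypothesis nondeg :
  forall x : 'I_n -> R[i], (forall j, ev (pderiv j W) x = 0) -> forall i, x i = 0.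

Let mu_gt0 : 0 < min_defect q := min_defect_gt0 q_lt1.
Let rho : R := ratr (d%:R * min_defect q).

Let k_lt_d j : (k j < d)%N.
Proof. by have := q_lt1 j; rewrite qE ltr_pdivrMr ?ltr0n // mul1r ltr_nat. Qed.

Lemma rho_le_codegree j : rho <= (d - k j)%:R.
Proof.
rewrite -(ratr_nat R) ler_rat (natrB _ (ltnW (k_lt_d j))).
apply: le_trans (ler_wpM2l (ler0n _ d) (min_defect_le q j)) _.
by rewrite qE mulrBr mulr1 mulrCA divff ?mulr1 // pnatr_eq0 -lt0n.
Qed.

Lemma natr_weight_delta i : (k i)%:R = d%:R * min_defect q * delta q i.
Proof. by rewrite /delta qE; field; rewrite lt0r_neq0 // pnatr_eq0 -lt0n. Qed.

Lemma grad_norm_scaled_polysphere_lb :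
  exists2 m : R, 0 < m & forall t v, 1 <= t -> polysphere v ->
    m * t `^ rho <= grad_norm W (fun j => t%:C%C ^+ k j * v j).
Proof.
have [m m_gt0 m_lb] := grad_norm_polysphere_lb nondeg.
exists m => // t v t_ge1 v_sph.
apply: le_trans (grad_norm_scaling k_lt_d hom v t_ge1 rho_le_codegree).
by rewrite mulrC; apply: ler_wpM2l; [exact: powR_ge0 | exact: m_lb].
Qed.

Lemma cabs_scaled_polysphere t v i : 0 < t -> polysphere v ->
  cabs (t%:C%C ^+ k i * v i) <= (t `^ rho) `^ ratr (delta q i).
Proof.
move=> t_gt0 v_sph; have tk_ge0 := exprn_ge0 (k i) (ltW t_gt0).
rewrite cabsM -rmorphXn cabs_real // /rho -powRrM -rmorphM -natr_weight_delta.
by rewrite rmorph_nat powR_mulrn ?(ltW t_gt0) // ler_piMr ?(v_sph.1 i).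
Qed.

Lemma gradient_estimate : exists C : R, forall u i,
  cabs (u i) <= C * (grad_norm W u + 1) `^ ratr (delta q i).
Proof.
have [m m_gt0 m_lb] := grad_norm_scaled_polysphere_lb.
pose e i : R := ratr (delta q i).
have e_ge0 i : 0 <= e i.
  by rewrite ler0q; apply: divr_ge0 (ltW mu_gt0); rewrite qE divr_ge0.
exists (1 + \sum_i m `^ (- e i)) => u i.
have [u_le1 | [t t_ge1 [v v_sph ->]]] := polydisc_or_scaled_polysphere k_gt0 u.
  have grad_ge0 : 0 <= grad_norm W u by apply: sumr_ge0 => j _; exact: cabs_ge0.
  have one_le : 1 <= (grad_norm W u + 1) `^ e i.
    by rewrite -[leLHS](powRr0 (grad_norm W u + 1)); apply: ler_powR; rewrite ?lerDr.
  apply: le_trans (u_le1 i) _; rewrite -[leLHS]mulr1; apply: ler_pM => //.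
  by rewrite lerDl sumr_ge0 // => j _; exact: powR_ge0.
have t_gt0 : 0 < t := lt_le_trans ltr01 t_ge1.
set g := grad_norm W _.
apply: le_trans (cabs_scaled_polysphere i t_gt0 v_sph) _.
apply: le_trans (powR_le_scaled (f := g + 1) m_gt0 (powR_ge0 _ _) (e_ge0 i) _) _.
  by apply: le_trans (m_lb _ _ t_ge1 v_sph) _; rewrite lerDl.
apply: ler_wpM2r; first exact: powR_ge0.
rewrite (bigD1 i) //= addrCA lerDl addr_ge0 // sumr_ge0 // => j _.
exact: powR_ge0.
Qed.

End GradientEstimate.

Theorem theorem5p8 (R : realType) (n : nat) (W : cpoly R n) (q : 'I_n -> rat) :
  nondegenerate_qh W q ->
  (forall i, q i < 1) ->
  [/\ exists C : R, forall (u : 'I_n -> R[i]) (i : 'I_n),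
        cabs (u i) <= C * ((\sum_(j < n) cabs (ev (pderiv j W) u) + 1) `^ (ratr (delta q i) : R)),
      ((forall i, q i <= 1/2) -> forall i, delta q i <= 1) &
      ((forall i, q i < 1/2) -> forall i, delta q i < 1)].
Proof.
move=> [[d [k [d_gt0 [k_gt0 [qE hom]]]]] _ nondeg] q_lt1.
split; [|exact: delta_le1|exact: delta_lt1].
exact: (gradient_estimate d_gt0 k_gt0 qE q_lt1 hom nondeg).
Qed.
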